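(* Suppose that $\mathrm{rot}(\mathcal G)$ is finite and $\mathcal R\subset\mathcal G$ has Property 2. Then $\ker(\|\cdot\|_{\mathcal R})=U_{\mathrm{iso},0,0}$. Moreover, with $d_3=d-d_{\mathrm{aff}}$ and $d_4=d_{\mathrm{aff}}-d_2$, the map \[\mathbb R^d\times\mathbb R^{d_3\times d_4}\times\mathrm{Skew}(d_4)\to\ker(\|\cdot\|_{\mathcal R}),\quad(a,A_1,A_2)\mapsto\Big(g\mapsto\mathrm{rot}(g)^T\Big(a+\Big(\begin{pmatrix}0&A_1\\-A_1^T&A_2\end{pmatrix}\oplus0_{d_2\times d_2}\Big)(g\cdot x_0-x_0)\Big)\Big)\] is a linear isomorphism; in particular $\dim\ker(\|\cdot\|_{\mathcal R})=d+d_4(d_3+d_1-1)/2$.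
   Context: Euclidean group: $\mathrm E(n)$ consists of pairs $(A|b)$, $A\in\mathrm O(n)$, $b\in\mathbb R^n$, acting by $(A|b)\cdot x=Ax+b$, product $(A_1|b_1)(A_2|b_2)=(A_1A_2|b_1+A_1b_2)$; $\mathrm{rot}(A|b)=A$. Standing setting: $d=d_1+d_2$; $\mathcal S<\mathrm E(d_2)$ is a space group with translation subgroup $\mathcal T_{\mathcal S}$; $A\oplus(B|b)=(\mathrm{diag}(A,B)|(0,b))$; $\mathcal G$ is a discrete subgroup of $\mathrm E(d)$ contained in $\{A\oplus s:A\in\mathrm O(d_1),s\in\mathcal S\}$ projecting onto $\mathcal S$; $\mathcal T\subset\mathcal G$ maps bijectively onto $\mathcal T_{\mathcal S}$. There is $m_0\in\mathbb N$ such that $\mathcal T^N=\{t^N:t\in\mathcal T\}$ is a normal subgroup iff $N\in\mathcal M=m_0\mathbb N$, then isomorphic to $\mathbb Z^{d_2}$ of finite index; $\mathcal C_N$ is a fixed set of representatives of $\mathcal G/\mathcal T^N$. $U_{\mathrm{per}}$: maps $u:\mathcal G\to\mathbb R^d$ that are $\mathcal T^N$-periodic ($u(gt)=u(g)$ for $t\in\mathcal T^N$) for some $N\in\mathcal M$. $x_0\in\mathbb R^d$ with $g\mapsto g\cdot x_0$ injective; $d_{\mathrm{aff}}=\dim\mathrm{aff}(\mathcal G\cdot x_0)$; assumed $\mathcal G\cdot x_0\subset\{0_{d-d_{\mathrm{aff}}}\}\times\mathbb R^{d_{\mathrm{aff}}}$ and $\mathcal G$ acts trivially on $\mathbb R^{d-d_{\mathrm{aff}}}\times\{0\}$.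 For $\mathcal R\subset\mathcal G$, $U_{\mathrm{iso}}(\mathcal R)$: maps $v:\mathcal R\to\mathbb R^d$ with $a\in\mathbb R^d$, $S\in\mathrm{Skew}(d)$ such that $\mathrm{rot}(g)v(g)=a+S(g\cdot x_0-x_0)$ on $\mathcal R$. For finite $\mathcal R$ and $\mathcal T^N$-periodic $u$: $\|u\|_{\mathcal R}=\big(\frac1{|\mathcal C_N|}\sum_{g\in\mathcal C_N}\mathrm{dist}(u(g\,\cdot)|_{\mathcal R},U_{\mathrm{iso}}(\mathcal R))^2\big)^{1/2}$. $U_{\mathrm{iso},0,0}$: maps $u:\mathcal G\to\mathbb R^d$ with $a\in\mathbb R^d$, $S\in\mathrm{Skew}(d_1)$ such that $\mathrm{rot}(g)u(g)=a+(S\oplus0_{d_2\times d_2})(g\cdot x_0-x_0)$ for all $g\in\mathcal G$. Property 1: $\mathcal R$ finite, $\mathrm{id}\in\mathcal R$, $\mathrm{aff}(\mathcal R\cdot x_0)=\mathrm{aff}(\mathcal G\cdot x_0)$. Property 2: $\mathcal R$ finite, and there are $\mathcal R',\mathcal R''$ with $\mathrm{id}\in\mathcal R'$, $\mathcal R'$ generating $\mathcal G$, $\mathcal R''$ with Property 1, and $\{gh:g\in\mathcal R',h\in\mathcal R''\}\subset\mathcal R$. *)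

From HB Require Import structures.
From mathcomp Require Import all_boot all_order all_algebra.
From mathcomp Require Import boolp classical_sets cardinality reals.
Set Implicit Arguments.
Unset Strict Implicit.
Unset Printing Implicit Defensive.
Import Order.TTheory GRing.Theory Num.Theory.
Local Open Scope ring_scope.
Local Open Scope classical_set_scope.

Section EuclDefs.
Variable R : realType.

(* E(n): pairs (A|b); validity (A orthogonal) is imposed by [subgroup]. *)
Definition Eucl (n : nat) := ('M[R]_n * 'cV[R]_n)%type.
Definition erot n (g : Eucl n) : 'M[R]_n := g.1.
Definition etrans n (g : Eucl n) : 'cV[R]_n := g.2.
Definition emul n (g h : Eucl n) : Eucl n := (g.1 *m h.1, g.2 + g.1 *m h.2).
Definition eone n : Eucl n := (1%:M, 0).
Definition einv n (g : Eucl n) : Eucl n := (g.1^T, - (g.1^T *m g.2)).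
Definition eact n (g : Eucl n) (x : 'cV[R]_n) : 'cV[R]_n := g.1 *m x + g.2.
Definition epow n (g : Eucl n) (N : nat) : Eucl n := iter N (emul g) (eone n).

Definition orthogonal_mx n (A : 'M[R]_n) := A *m A^T = 1%:M.
Definition skew_mx n (A : 'M[R]_n) := A^T = - A.

Definition dsum n1 n2 (A : 'M[R]_n1) (s : Eucl n2) : Eucl (n1 + n2) :=
  (block_mx A 0 0 s.1, col_mx 0 s.2).
Definition sproj n1 n2 (g : Eucl (n1 + n2)) : Eucl n2 := (drsubmx g.1, dsubmx g.2).

Definition subgroup n (G : set (Eucl n)) :=
  [/\ G (eone n), (forall g h, G g -> G h -> G (emul g h)),
      (forall g, G g -> G (einv g)) & (forall g, G g -> orthogonal_mx (erot g))].

Definition normal_subgroup n (H G : set (Eucl n)) :=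
  [/\ subgroup H, H `<=` G &
      forall g h, G g -> H h -> H (emul (emul g h) (einv g))].

(* discrete: every element is isolated (topology of O(n) x R^n inside R^(n*n+n)) *)
Definition discrete_set n (G : set (Eucl n)) :=
  forall g, G g -> exists2 eps : R, 0 < eps &
    forall h, G h -> (forall i j, `|erot h i j - erot g i j| < eps) ->
      (forall i, `|etrans h i ord0 - etrans g i ord0| < eps) -> h = g.

Definition sqnorm n (x : 'cV[R]_n) : R := \sum_i x i ord0 ^+ 2.

(* space group: discrete cocompact subgroup of E(n)
   (cocompact: R^n is covered by the S-translates of a closed ball) *)
Definition space_group n (S : set (Eucl n)) :=
  [/\ subgroup S, discrete_set S &
      exists r : R, forall x : 'cV[R]_n, exists2 s, S s & sqnorm (x - eact s 0) <= r ^+ 2].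

Definition transl_subgroup n (S : set (Eucl n)) : set (Eucl n) :=
  [set s | S s /\ erot s = 1%:M].

Definition powset n (T : set (Eucl n)) (N : nat) : set (Eucl n) :=
  [set epow t N | t in T].

Definition reps n (G H : set (Eucl n)) (C : seq (Eucl n)) :=
  [/\ uniq C, (forall c, c \in C -> G c),
      (forall g, G g -> exists2 c, c \in C & H (emul (einv c) g)) &
      (forall c1 c2, c1 \in C -> c2 \in C -> H (emul (einv c1) c2) -> c1 = c2)].

Definition in_M n (G T : set (Eucl n)) (N : nat) :=
  (0 < N)%N /\ normal_subgroup (powset T N) G.

Definition periodic n (G H : set (Eucl n)) (u : Eucl n -> 'cV[R]_n) :=
  forall g t, G g -> H t -> u (emul g t) = u g.

Definition Uiso n (x0 : 'cV[R]_n) (Rs : seq (Eucl n)) (v : Eucl n -> 'cV[R]_n) :=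
  exists a : 'cV[R]_n, exists2 S : 'M[R]_n, skew_mx S &
    forall h, h \in Rs -> erot h *m v h = a + S *m (eact h x0 - x0).

Definition dist_iso n (x0 : 'cV[R]_n) (Rs : seq (Eucl n)) (v : Eucl n -> 'cV[R]_n) : R :=
  inf [set Num.sqrt (\sum_(h <- Rs) sqnorm (v h - w h)) | w in Uiso x0 Rs].

(* ||u||_R computed with the representatives C = C_N *)
Definition normR n (x0 : 'cV[R]_n) (Rs : seq (Eucl n)) (C : seq (Eucl n))
  (u : Eucl n -> 'cV[R]_n) : R :=
  Num.sqrt ((size C)%:R^-1 *
            \sum_(g <- C) (dist_iso x0 Rs (fun h => u (emul g h))) ^+ 2).

Definition ker_norm n (G T : set (Eucl n)) (C : nat -> seq (Eucl n)) (x0 : 'cV[R]_n)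
  (Rs : seq (Eucl n)) (u : Eucl n -> 'cV[R]_n) :=
  exists N, [/\ in_M G T N, periodic G (powset T N) u & normR x0 Rs (C N) u = 0].

Definition Uiso00 n1 n2 (G : set (Eucl (n1 + n2))) (x0 : 'cV[R]_(n1 + n2))
  (u : Eucl (n1 + n2) -> 'cV[R]_(n1 + n2)) :=
  exists a : 'cV[R]_(n1 + n2), exists2 S : 'M[R]_n1, skew_mx S &
    forall g, G g -> erot g *m u g = a + block_mx S 0 0 (0 : 'M[R]_n2) *m (eact g x0 - x0).

Definition eorbit n (G : set (Eucl n)) (x0 : 'cV[R]_n) : set 'cV[R]_n :=
  [set eact g x0 | g in G].

Definition aff_hull n (A : set 'cV[R]_n) : set 'cV[R]_n :=
  [set x | exists m (c : 'I_m -> R) (p : 'I_m -> 'cV[R]_n),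
     [/\ forall i, A (p i), \sum_i c i = 1 & x = \sum_i c i *: p i]].

Definition lin_indep n k (b : 'I_k -> 'cV[R]_n) :=
  forall c : 'I_k -> R, \sum_i c i *: b i = 0 -> forall i, c i = 0.

Definition aff_dim n (A : set 'cV[R]_n) (k : nat) :=
  exists (a0 : 'cV[R]_n) (b : 'I_k -> 'cV[R]_n), lin_indep b /\
    aff_hull A = [set a0 + \sum_i c i *: b i | c in [set: 'I_k -> R]].

Definition prop1 n (G : set (Eucl n)) (x0 : 'cV[R]_n) (Rr : set (Eucl n)) :=
  [/\ Rr `<=` G, finite_set Rr, Rr (eone n) &
      aff_hull (eorbit Rr x0) = aff_hull (eorbit G x0)].

Definition eprod n (l : seq (Eucl n * bool)) : Eucl n :=
  foldr (fun p acc => emul (if p.2 then p.1 else einv p.1) acc) (eone n) l.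

Definition generates n (G Rr : set (Eucl n)) :=
  Rr `<=` G /\
  forall g, G g -> exists l : seq (Eucl n * bool), (forall p, p \in l -> Rr p.1) /\ g = eprod l.

Definition prop2 n (G : set (Eucl n)) (x0 : 'cV[R]_n) (Rs : seq (Eucl n)) :=
  [/\ uniq Rs, (forall h, h \in Rs -> G h) &
    exists R' R'' : set (Eucl n),
      [/\ R' (eone n), generates G R', prop1 G x0 R'' &
          forall g h, R' g -> R'' h -> emul g h \in Rs]].

Definition Phi d3 d4 d2 (x0 : 'cV[R]_((d3 + d4) + d2)) (a : 'cV[R]_((d3 + d4) + d2))
  (A1 : 'M[R]_(d3, d4)) (A2 : 'M[R]_d4) (g : Eucl ((d3 + d4) + d2)) : 'cV[R]_((d3 + d4) + d2) :=
  (erot g)^T *m (a + block_mx (block_mx 0 A1 (- A1^T) A2) 0 0 (0 : 'M[R]_d2) *m (eact g x0 - x0)).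

(* P (a set of maps G -> R^n, identified when equal on G) is a linear space of dimension k *)
Definition fun_space_dim n (G : set (Eucl n)) (P : (Eucl n -> 'cV[R]_n) -> Prop) (k : nat) :=
  exists b : 'I_k -> (Eucl n -> 'cV[R]_n),
    [/\ forall c : 'I_k -> R, P (fun g => \sum_i c i *: b i g),
        (forall c : 'I_k -> R, (forall g, G g -> \sum_i c i *: b i g = 0) -> forall i, c i = 0) &
        (forall u, P u -> exists c : 'I_k -> R, forall g, G g -> u g = \sum_i c i *: b i g)].

End EuclDefs.

(* If [||u||_R = 0], then on every translate [g R] the field [u] agrees with an
   infinitesimal rigid motion [(a_g, S_g)]: [U_iso(R)] is a linear subspace of a
   finite-dimensional space, hence closed, so distance zero means membership.
   By Property 2 the translates [g R] and [g h R] (for a generator [h]) overlap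
   on [g h R''], whose orbit spans the affine hull of the whole orbit; this
   transports [(a_g, S_g)] along words in the generators, so a single pair
   [(a, S)] works on all of [G].  Periodicity under [T^N] together with
   [rot(g)^K = 1] makes [u] constant along the pure lattice translations
   [t^(N K)], so [S] kills the lattice vectors; these span [R^d2] (the space
   group is cocompact), and skewness gives [S = S' (+) 0].  Conversely such
   fields are periodic and isometric on every translate.  Since the orbit spans
   exactly the last [d4 + d2] coordinates, [S'] is seen only through its blocks
   [A1] and (skew) [A2], which it determines; counting their entries gives the
   dimension [d + d3 d4 + d4 (d4 - 1) / 2]. *)

From HB Require Import structures.
From mathcomp Require Import all_boot all_order all_algebra.
From mathcomp Require Import boolp classical_sets cardinality reals.
From mathcomp Require Import ring lra zify.
Set Implicit Arguments.
Unset Strict Implicit.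
Unset Printing Implicit Defensive.
Import Order.TTheory GRing.Theory Num.Theory.
Local Open Scope ring_scope.
Local Open Scope classical_set_scope.

Section EuclideanGroup.
Variables (R : realType) (n : nat).
Implicit Types (g h : Eucl R n) (A : 'M[R]_n).

Lemma orth_trmx_mul A : orthogonal_mx A -> A^T *m A = 1%:M.
Proof. exact: mulmx1C. Qed.

Lemma orth_trmxK A (y : 'cV[R]_n) : orthogonal_mx A -> A^T *m (A *m y) = y.
Proof. by move=> oA; rewrite mulmxA orth_trmx_mul ?mul1mx. Qed.

Lemma orthK A (y : 'cV[R]_n) : orthogonal_mx A -> A *m (A^T *m y) = y.
Proof. by move=> oA; rewrite mulmxA oA mul1mx. Qed.

Lemma mul_affine_lin A (S S' : 'M[R]_n) (a a' y : 'cV[R]_n) (k : R) :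
  A *m (k *: a + a' + (k *: S + S') *m y) =
  k *: (A *m (a + S *m y)) + A *m (a' + S' *m y).
Proof.
rewrite mulmxDl -scalemxAl !mulmxDr -!scalemxAr scalerDr.
by rewrite -!addrA; congr (_ + _); rewrite addrCA.
Qed.

Lemma emulA g h (k : Eucl R n) : emul (emul g h) k = emul g (emul h k).
Proof. by rewrite /emul /=; congr pair; rewrite ?mulmxA // mulmxDr mulmxA addrA. Qed.

Lemma emul1g g : emul (eone R n) g = g.
Proof. by case: g => a b; rewrite /emul /eone /= !mul1mx add0r. Qed.

Lemma emulg1 g : emul g (eone R n) = g.
Proof. by case: g => a b; rewrite /emul /eone /= mulmx1 mulmx0 addr0. Qed.

Lemma emulV g : orthogonal_mx g.1 -> emul g (einv g) = eone R n.
Proof. by case: g => a b /= oa; rewrite /emul /einv /eone /= oa mulmxN mulmxA oa mul1mx subrr. Qed.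

Lemma emulVg g : orthogonal_mx g.1 -> emul (einv g) g = eone R n.
Proof. by case: g => a b /= oa; rewrite /emul /einv /eone /= orth_trmx_mul // addrC subrr. Qed.

Lemma einvK g : orthogonal_mx g.1 -> einv (einv g) = g.
Proof. by case: g => a b /= oa; rewrite /einv /= trmxK mulmxN mulmxA oa mul1mx opprK. Qed.

Lemma eact_mul g h x : eact (emul g h) x = eact g (eact h x).
Proof. by rewrite /eact /emul /= mulmxDr mulmxA addrAC addrA. Qed.

Lemma eact1 x : eact (eone R n) x = x.
Proof. by rewrite /eact /eone /= mul1mx addr0. Qed.

Lemma eactB g x y : eact g x - eact g y = g.1 *m (x - y).
Proof. by rewrite /eact mulmxBr opprD addrACA subrr addr0. Qed.

Lemma eact_transl (v x : 'cV[R]_n) : eact ((1%:M, v) : Eucl R n) x - x = v.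
Proof. by rewrite /eact /= mul1mx addrC addKr. Qed.

Lemma eact_mul_subx g h x :
  eact (emul g h) x - x = (eact g x - x) + g.1 *m (eact h x - x).
Proof. by rewrite -eactB -eact_mul [RHS]addrC addrA subrK. Qed.

Lemma epowS g m : epow g m.+1 = emul g (epow g m).
Proof. by []. Qed.

Lemma epowD g m k : epow g (m + k) = emul (epow g m) (epow g k).
Proof. by elim: m => [|m IH]; rewrite ?emul1g // addSn !epowS IH emulA. Qed.

Lemma epowM g m k : epow g (m * k) = epow (epow g m) k.
Proof. by elim: k => [|k IH]; rewrite ?muln0 // mulnS epowD IH. Qed.

Lemma epowSr g m : epow g m.+1 = emul (epow g m) g.
Proof. by rewrite -addn1 epowD epowS emulg1. Qed.

Lemma epow_rot g m : (epow g m).1 = g.1 ^+ m.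
Proof. by elim: m => [|m IH]; rewrite ?expr0 // epowS exprS /= IH mulmxE. Qed.

Lemma epow_fixed_transl g m : g.1 *m g.2 = g.2 -> epow g m = (g.1 ^+ m, m%:R *: g.2).
Proof.
move=> fix_g; elim: m => [|m IH]; first by rewrite expr0 scale0r.
rewrite epowS IH /emul /= exprS mulmxE -scalemxAr -mulmxE fix_g.
by rewrite mulrS scalerDl scale1r.
Qed.

Section Subgroup.
Variable G : set (Eucl R n).
Hypothesis sG : subgroup G.

Lemma subgroup1 : G (eone R n). Proof. by case: sG. Qed.

Lemma subgroupM g h : G g -> G h -> G (emul g h).
Proof. by case: sG => _ GM _ _; apply: GM. Qed.

Lemma subgroupV g : G g -> G (einv g).
Proof. by case: sG => _ _ GV _; apply: GV. Qed.

Lemma subgroup_orth g : G g -> orthogonal_mx g.1.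
Proof. by case: sG => _ _ _ GO; apply: GO. Qed.

Lemma subgroup_epow g m : G g -> G (epow g m).
Proof.
move=> Gg; elim: m => [|m IH]; first exact: subgroup1.
by rewrite epowS; apply: subgroupM.
Qed.

End Subgroup.
End EuclideanGroup.

Section ClosedLinearImage.
Variable R : realType.

Lemma eq0_of_le_eps_mul (a c : R) : 0 <= c ->
  (forall eps, 0 < eps -> `|a| <= eps * c) -> a = 0.
Proof.
move=> c0 small; apply/eqP/negPn/negP => a0.
have pa : 0 < `|a| by rewrite normr_gt0.
have c1 : 0 < c + 1 by exact: ltr_wpDl c0 ltr01.
have := small (`|a| / (c + 1)) (divr_gt0 pa c1).
by rewrite mulrAC ler_pdivlMr // => ?; nra.
Qed.

(* The image of [f] is a linear subspace, cut out by the cokernel of the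
   matrix of [f]; an entrywise limit of images is killed by that cokernel. *)
Lemma linear_image_closed (p m n : nat) (f : 'rV[R]_p -> 'M[R]_(m, n))
    (V : 'M[R]_(m, n)) :
  (forall k x y, f (k *: x + y) = k *: f x + f y) ->
  (forall eps, 0 < eps -> exists x, forall i j, `|V i j - f x i j| <= eps) ->
  exists x, V = f x.
Proof.
move=> f_lin approx.
pose g x : 'rV[R]_(m * n) := mxvec (f x).
have f_sum (I : Type) (r : seq I) (c : I -> R) (x : I -> 'rV_p) :
    f (\sum_(i <- r) c i *: x i) = \sum_(i <- r) c i *: f (x i).
  elim: r => [|a r IH]; last by rewrite !big_cons f_lin IH.
  have := f_lin 1 0 0; rewrite !big_nil !scale1r addr0 => f00.
  by apply: (addrI (f 0)); rewrite addr0 -f00.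
pose M := \matrix_(i < p) g (delta_mx 0 i).
have gM x : g x = x *m M.
  rewrite mulmx_sum_row {1}[x]matrix_sum_delta big_ord1 /g f_sum linear_sum.
  by apply: eq_bigr => i _; rewrite linearZ /= rowK.
pose K := cokermx M.
have VK : mxvec V *m K = 0.
  apply/matrixP => a b; rewrite [RHS]mxE.
  apply: (@eq0_of_le_eps_mul _ (\sum_l `|K l b|)); first exact: sumr_ge0.
  move=> eps /approx [x close].
  have -> : mxvec V *m K = (mxvec V - g x) *m K.
    by rewrite mulmxBl gM -mulmxA mulmx_coker mulmx0 subr0.
  rewrite !mxE mulr_sumr; apply: le_trans (ler_norm_sum _ _ _) _.
  apply: ler_sum => l _; rewrite normrM; apply: ler_wpM2r => //.
  case/mxvec_indexP: l => i j; rewrite (ord1 a) !mxE /g !mxvecE; exact: close.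
have /submxP[D VD] : (mxvec V <= M)%MS by rewrite submxE VK.
by exists D; apply: (can_inj (@mxvecK _ _ _)); rewrite VD -gM.
Qed.

End ClosedLinearImage.

Section DistIso.
Variables (R : realType) (n : nat) (x0 : 'cV[R]_n) (Rs : seq (Eucl R n)).
Implicit Types (u v : Eucl R n -> 'cV[R]_n).

Lemma sqnorm_ge0 (z : 'cV[R]_n) : 0 <= sqnorm z.
Proof. by apply: sumr_ge0 => i _; exact: sqr_ge0. Qed.

Lemma sqr_le_sqnorm (z : 'cV[R]_n) j : z j 0 ^+ 2 <= sqnorm z.
Proof. by rewrite /sqnorm (bigD1 j) //= lerDl; apply: sumr_ge0 => i _; exact: sqr_ge0. Qed.

Lemma Uiso0 : Uiso x0 Rs (fun _ => 0).
Proof.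
exists 0; exists 0; first by rewrite /skew_mx trmx0 oppr0.
by move=> h _; rewrite mulmx0 mul0mx addr0.
Qed.

Lemma has_inf_dist_iso (v : Eucl R n -> 'cV[R]_n) :
  has_inf [set Num.sqrt (\sum_(h <- Rs) sqnorm (v h - w h)) | w in Uiso x0 Rs].
Proof.
split; first by exists (Num.sqrt (\sum_(h <- Rs) sqnorm (v h - 0))), (fun _ => 0);
  first exact: Uiso0.
by exists 0 => _ [w _ <-]; exact: sqrtr_ge0.
Qed.

Lemma dist_iso_Uiso v : Uiso x0 Rs v -> dist_iso x0 Rs v = 0.
Proof.
move=> Uv; have [_ lb] := has_inf_dist_iso v.
have E0 : [set Num.sqrt (\sum_(h <- Rs) sqnorm (v h - w h)) | w in Uiso x0 Rs] 0.
  exists v => //; rewrite big1 ?sqrtr0 // => h _.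
  by rewrite subrr /sqnorm big1 // => i _; rewrite mxE expr0n.
apply/eqP; rewrite eq_le; apply/andP; split; first exact: ge_inf.
by apply: lb_le_inf => [|_ [w _ <-]]; [exists 0 | exact: sqrtr_ge0].
Qed.

Lemma dist_iso0_approx v : dist_iso x0 Rs v = 0 ->
  forall eps, 0 < eps -> exists2 w, Uiso x0 Rs w &
    forall h j, h \in Rs -> `|v h j 0 - w h j 0| <= eps.
Proof.
move=> d0 eps eps0.
have [_ [w Uw <-] close] := inf_adherent eps0 (has_inf_dist_iso v).
exists w => // h j hRs; move: close; rewrite -[inf _]/(dist_iso x0 Rs v) d0 add0r => close.
have sum_lt : sqnorm (v h - w h) < eps ^+ 2.
  apply: (le_lt_trans (y := \sum_(h <- Rs) sqnorm (v h - w h))).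
    by rewrite (big_rem h) //= lerDl; apply: sumr_ge0 => l _; exact: sqnorm_ge0.
  by rewrite -(ltr_sqrt _ (exprn_gt0 2 eps0)) sqrtr_sqr gtr0_norm.
have := le_lt_trans (sqr_le_sqnorm _ j) sum_lt; rewrite !mxE => lt.
by rewrite ler_norml; apply/andP; split; nra.
Qed.

Lemma Uiso_of_approx v : (forall h, h \in Rs -> orthogonal_mx h.1) ->
  (forall eps, 0 < eps -> exists2 w, Uiso x0 Rs w &
    forall h j, h \in Rs -> `|v h j 0 - w h j 0| <= eps) ->
  Uiso x0 Rs v.
Proof.
move=> orthRs approx.
pose h_ (k : 'I_(size Rs)) := nth (eone R n) Rs k.
(* A parameter row [x = (a^T, mxvec X)] encodes the motion [(a, X - X^T)],
   so that [U_iso] is the image of a linear map on row vectors. *)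
pose pa (x : 'rV[R]_(n + n * n)) : 'cV[R]_n := (lsubmx x)^T.
pose pS (x : 'rV[R]_(n + n * n)) : 'M[R]_n := vec_mx (rsubmx x) - (vec_mx (rsubmx x))^T.
pose iso x (h : Eucl R n) := h.1^T *m (pa x + pS x *m (eact h x0 - x0)).
pose f x : 'M[R]_(size Rs, n) := \matrix_(k, j) iso x (h_ k) j 0.
have pS_skew x : skew_mx (pS x) by rewrite /skew_mx /pS linearB /= trmxK opprB.
have iso_Uiso w : Uiso x0 Rs w -> exists x, forall h, h \in Rs -> w h = iso x h.
  case=> a [S skS Sw]; pose x := row_mx a^T (mxvec (2^-1 *: S)).
  have pSx : pS x = S.
    rewrite /pS /x row_mxKr mxvecK linearZ /= skS scalerN opprK -scalerDl.
    by rewrite (_ : 2^-1 + 2^-1 = 1) ?scale1r //; field.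
  exists x => h hRs; rewrite /iso pSx /pa /x row_mxKl trmxK -Sw //.
  by rewrite orth_trmxK //; apply: orthRs.
have f_lin k x y : f (k *: x + y) = k *: f x + f y.
  have pa_lin : pa (k *: x + y) = k *: pa x + pa y by rewrite /pa !linearP.
  have pS_lin : pS (k *: x + y) = k *: pS x + pS y.
    by rewrite /pS !linearP /= scalerBr scalerN addrACA.
  by apply/matrixP => i j; rewrite [LHS]mxE /iso pa_lin pS_lin mul_affine_lin !mxE.
have [x vx] : exists x, \matrix_(k, j) v (h_ k) j 0 = f x.
  apply: linear_image_closed => // eps /approx[w /iso_Uiso[x wx] close].
  exists x => i j; have hi : h_ i \in Rs by rewrite mem_nth.
  by rewrite [X in `|X - _|]mxE [f x i j]mxE -wx //; exact: close.
exists (pa x); exists (pS x) => // h hRs.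
have hk : (index h Rs < size Rs)%N by rewrite index_mem.
have vh : v h = iso x h.
  apply/matrixP => j z; rewrite (ord1 z).
  have := congr1 (fun M : 'M[R]_(size Rs, n) => M (Ordinal hk) j) vx.
  by rewrite !mxE /h_ /= nth_index.
by rewrite vh /iso orthK //; apply: orthRs.
Qed.

Lemma dist_iso_eq0P v : (forall h, h \in Rs -> orthogonal_mx h.1) ->
  dist_iso x0 Rs v = 0 <-> Uiso x0 Rs v.
Proof.
move=> orthRs; split; last exact: dist_iso_Uiso.
by move/dist_iso0_approx; exact: Uiso_of_approx.
Qed.

Lemma normR_eq0_dist_iso (C : seq (Eucl R n)) u : C != [::] ->
  normR x0 Rs C u = 0 -> forall c, c \in C -> dist_iso x0 Rs (fun h => u (emul c h)) = 0.
Proof.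
move=> C0 /eqP; rewrite sqrtr_eq0 pmulr_rle0 ?invr_gt0 ?ltr0n ?lt0n ?size_eq0 //.
move=> le0 c cC; apply/eqP; rewrite -sqrf_eq0.
have : \sum_(g <- C) dist_iso x0 Rs (fun h => u (emul g h)) ^+ 2 = 0.
  by apply/eqP; rewrite eq_le le0 sumr_ge0 // => g _; exact: sqr_ge0.
move/eqP; rewrite psumr_eq0 => [/allP/(_ c cC)//|g _]; exact: sqr_ge0.
Qed.

End DistIso.

Section AffineHull.
Variables (R : realType) (n : nat).

Lemma mem_aff_hull (A : set 'cV[R]_n) p : A p -> aff_hull A p.
Proof. by exists 1%N, (fun _ => 1), (fun _ => p); rewrite !big_ord1 scale1r. Qed.

Lemma aff_hull_kill m (M : 'M[R]_(m, n)) (A : set 'cV[R]_n) x0 p :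
  (forall q, A q -> M *m (q - x0) = 0) -> aff_hull A p -> M *m (p - x0) = 0.
Proof.
move=> kill [k [c [q [Aq c1 ->]]]].
have -> : \sum_i c i *: q i - x0 = \sum_i c i *: (q i - x0).
  by rewrite (eq_bigr _ (fun i _ => scalerBr _ _ _)) sumrB -scaler_suml c1 scale1r.
by rewrite mulmx_sumr big1 // => i _; rewrite -scalemxAr kill ?scaler0.
Qed.

Lemma aff_dim_dir_kill m (M : 'M[R]_(m, n)) (A : set 'cV[R]_n) x0 k a0
    (b : 'I_k -> 'cV[R]_n) :
  aff_hull A = [set a0 + \sum_i c i *: b i | c in [set: 'I_k -> R]] ->
  (forall q, A q -> M *m (q - x0) = 0) -> forall i, M *m b i = 0.
Proof.
move=> aff kill i.
have hull c : M *m (a0 + \sum_l c l *: b l - x0) = 0.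
  by apply: (aff_hull_kill kill); rewrite aff; exists c.
have h0 : M *m (a0 - x0) = 0.
  by have := hull (fun _ => 0); rewrite big1 ?addr0 // => l _; exact: scale0r.
have := hull (fun l => (l == i)%:R).
rewrite (bigD1 i) //= eqxx scale1r big1 => [|l /negbTE->]; last exact: scale0r.
by rewrite addr0 addrAC mulmxDr h0 add0r.
Qed.

End AffineHull.

Section Propagation.
Variables (R : realType) (n : nat) (G : set (Eucl R n)) (x0 : 'cV[R]_n).
Variables (Rs : seq (Eucl R n)) (u : Eucl R n -> 'cV[R]_n).
Hypothesis sG : subgroup G.
Variables R1 R2 : set (Eucl R n).
Hypotheses (R1e : R1 (eone R n)) (R1gen : generates G R1) (R2p : prop1 G x0 R2).
Hypothesis R12 : forall g h, R1 g -> R2 h -> emul g h \in Rs.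

Definition iso_on g a S :=
  forall h, h \in Rs -> h.1 *m u (emul g h) = a + S *m (eact h x0 - x0).

Hypothesis iso_loc : forall g, G g -> exists a S, skew_mx S /\ iso_on g a S.

Definition orbit_diff (z : 'cV[R]_n) :=
  exists g1 g2, [/\ G g1, G g2 & z = eact g1 x0 - eact g2 x0].

Definition agree_on_diffs (P Q : 'M[R]_n) := forall z, orbit_diff z -> P *m z = Q *m z.

Lemma orbit_diff_rot g z : G g -> orbit_diff z -> orbit_diff (g.1 *m z).
Proof.
move=> Gg [g1 [g2 [Gg1 Gg2 ->]]]; exists (emul g g1), (emul g g2).
by split; [exact: subgroupM | exact: subgroupM | rewrite !eact_mul eactB].
Qed.

Lemma orbit_diff_x0 g : G g -> orbit_diff (eact g x0 - x0).
Proof. by move=> Gg; exists g, (eone R n); rewrite eact1; split => //; exact: subgroup1. Qed.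

Lemma agree_on_diffs_mulmx (A B C D : 'M[R]_n) : agree_on_diffs (A *m B) (C *m D) ->
  forall z, orbit_diff z -> A *m (B *m z) = C *m (D *m z).
Proof. by move=> AB z Dz; rewrite !mulmxA AB. Qed.

Let R2e : R2 (eone R n). Proof. by case: R2p. Qed.
Let R1G : R1 `<=` G. Proof. by case: R1gen. Qed.
Let eRs : eone R n \in Rs. Proof. by have := R12 R1e R2e; rewrite emul1g. Qed.
Let R1Rs h : R1 h -> h \in Rs. Proof. by move=> h1; have := R12 h1 R2e; rewrite emulg1. Qed.
Let R2Rs h : R2 h -> h \in Rs. Proof. by move=> h2; have := R12 R1e h2; rewrite emul1g. Qed.

(* [R2] has Property 1, so its orbit already spans the affine hull of the
   whole orbit. *)
Lemma agree_on_diffs_R2 (P Q : 'M[R]_n) :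
  (forall h, R2 h -> P *m (eact h x0 - x0) = Q *m (eact h x0 - x0)) -> agree_on_diffs P Q.
Proof.
move=> PQ.
have PQ_orbit g : G g -> (P - Q) *m (eact g x0 - x0) = 0.
  move=> Gg; case: R2p => _ _ _ aff; apply: (aff_hull_kill (A := eorbit R2 x0)).
    by move=> _ [h R2h <-]; rewrite mulmxBl PQ // subrr.
  by rewrite aff; apply: mem_aff_hull; exists g.
move=> _ [g1 [g2 [Gg1 Gg2 ->]]].
have -> : eact g1 x0 - eact g2 x0 = (eact g1 x0 - x0) - (eact g2 x0 - x0).
  by rewrite opprB addrA subrK.
by apply/eqP; rewrite -subr_eq0 -mulmxBl mulmxBr !PQ_orbit // subrr.
Qed.

Lemma iso_on_value g a S : iso_on g a S -> u g = a.
Proof. by move=> iso_g; have := iso_g _ eRs; rewrite emulg1 eact1 subrr mulmx0 addr0 mul1mx. Qed.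

(* The translates [g Rs] and [g h' Rs] overlap on [g h' R2]. *)
Lemma iso_on_step g h' a S a' S' : G g -> R1 h' -> iso_on g a S -> iso_on (emul g h') a' S' ->
  h'.1 *m a' = a + S *m (eact h' x0 - x0) /\ agree_on_diffs (h'.1 *m S') (S *m h'.1).
Proof.
move=> Gg h1 iso_g iso_gh.
have ua' := iso_on_value iso_gh.
have step_a : h'.1 *m a' = a + S *m (eact h' x0 - x0) by rewrite -ua' -iso_g ?R1Rs.
split => //; apply: agree_on_diffs_R2 => h'' h2.
have e1 := iso_g _ (R12 h1 h2).
have e2 := iso_gh _ (R2Rs h2).
suff : a + S *m (eact h' x0 - x0) + h'.1 *m (S' *m (eact h'' x0 - x0)) =
       a + S *m (eact h' x0 - x0) + S *m (h'.1 *m (eact h'' x0 - x0)).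
  by move/addrI; rewrite !mulmxA.
rewrite -[RHS]addrA -mulmxDr -eact_mul_subx -e1 -emulA.
by rewrite /emul /= -mulmxA e2 mulmxDr step_a.
Qed.

Definition iso_along a0 S0 g :=
  (forall a' S', iso_on g a' S' -> agree_on_diffs (g.1 *m S') (S0 *m g.1)) /\
  g.1 *m u g = a0 + S0 *m (eact g x0 - x0).

Lemma iso_along_mul a0 S0 g h' : G g -> R1 h' ->
  iso_along a0 S0 g -> iso_along a0 S0 (emul g h').
Proof.
move=> Gg h1 [agree_g iso_g].
have Gh := R1G h1.
have [a [S [_ iso_a]]] := iso_loc Gg.
have [a' [S' [_ iso_a']]] := iso_loc (subgroupM sG Gg Gh).
have [step_a _] := iso_on_step Gg h1 iso_a iso_a'.
split.
- move=> a2 S2 iso_2 z Dz; have [_ ag] := iso_on_step Gg h1 iso_a iso_2.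
  rewrite /= -!mulmxA (agree_on_diffs_mulmx ag) //.
  by rewrite (agree_on_diffs_mulmx (agree_g _ _ iso_a)) //; exact: orbit_diff_rot.
- rewrite /= -mulmxA (iso_on_value iso_a') step_a mulmxDr -(iso_on_value iso_a) iso_g.
  rewrite (agree_on_diffs_mulmx (agree_g _ _ iso_a)); last exact: orbit_diff_x0.
  by rewrite -addrA -mulmxDr -eact_mul_subx.
Qed.

Lemma iso_along_mulV a0 S0 g h' : G g -> R1 h' ->
  iso_along a0 S0 g -> iso_along a0 S0 (emul g (einv h')).
Proof.
move=> Gg h1 [agree_g iso_g].
have Gh := R1G h1; have oh := subgroup_orth sG Gh.
set k := emul g (einv h').
have Gk : G k by apply: subgroupM => //; exact: subgroupV.
have kh : emul k h' = g by rewrite /k emulA emulVg ?emulg1.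
have [a [S [_ iso_a]]] := iso_loc Gk.
have [a1 [S1 [_ iso_1]]] := iso_loc Gg.
have iso_1' : iso_on (emul k h') a1 S1 by rewrite kh.
have kh1 : k.1 *m h'.1 = g.1 by rewrite -kh.
have agree_k a' S' : iso_on k a' S' -> agree_on_diffs (k.1 *m S') (S0 *m k.1).
  move=> iso' z Dz; have [_ ag] := iso_on_step Gk h1 iso' iso_1'.
  have Dy : orbit_diff (h'.1^T *m z) by apply: (orbit_diff_rot (subgroupV sG Gh)).
  rewrite -!mulmxA -{1}(orthK z oh) -(agree_on_diffs_mulmx ag) // !mulmxA kh1.
  by rewrite -!mulmxA (agree_on_diffs_mulmx (agree_g _ _ iso_1)) // orthK.
split => //.
have [step_a _] := iso_on_step Gk h1 iso_a iso_1'.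
have ea : a = h'.1 *m a1 - S *m (eact h' x0 - x0) by rewrite step_a addrK.
rewrite (iso_on_value iso_a) ea mulmxBr mulmxA kh1 -(iso_on_value iso_1) iso_g.
rewrite (agree_on_diffs_mulmx (agree_k _ _ iso_a)); last exact: orbit_diff_x0.
by rewrite -{1}kh eact_mul_subx mulmxDr addrA addrK.
Qed.

Lemma iso_along_eprod a0 S0 (l : seq (Eucl R n * bool)) :
  (forall q, q \in l -> R1 q.1) ->
  forall g, G g -> iso_along a0 S0 g -> iso_along a0 S0 (emul g (eprod l)).
Proof.
elim: l => [|[p b] l IH] l_R1 g Gg iso_g; first by rewrite /eprod /= emulg1.
have R1p : R1 p by exact: (l_R1 (p, b) (mem_head _ _)).
have l'_R1 q : q \in l -> R1 q.1 by move=> ql; apply: l_R1; rewrite in_cons ql orbT.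
rewrite /= -emulA; case: b {l_R1}; apply: IH => //.
- by apply: subgroupM => //; exact: R1G.
- exact: iso_along_mul.
- by apply: subgroupM => //; apply: subgroupV => //; exact: R1G.
- exact: iso_along_mulV.
Qed.

Lemma global_iso_of_local : exists a0 S0, skew_mx S0 /\
  forall g, G g -> g.1 *m u g = a0 + S0 *m (eact g x0 - x0).
Proof.
have [a0 [S0 [skS0 iso_0]]] := iso_loc (subgroup1 sG).
exists a0, S0; split => // g Gg.
suff iso_1 : iso_along a0 S0 (eone R n).
  have [_ gen] := R1gen; have [l [l_R1 ->]] := gen g Gg.
  by rewrite -(emul1g (eprod l)); case: (iso_along_eprod l_R1 (subgroup1 sG) iso_1).
split; last by rewrite eact1 subrr mulmx0 addr0 (iso_on_value iso_0) mul1mx.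
move=> a' S' iso'; have aa : a' = a0 by rewrite -(iso_on_value iso') (iso_on_value iso_0).
rewrite mul1mx mulmx1; apply: agree_on_diffs_R2 => h h2.
by have := iso_0 _ (R2Rs h2); rewrite (iso' _ (R2Rs h2)) aa => /addrI.
Qed.

End Propagation.

Section Exponent.
Variables (R : realType) (n : nat).

Lemma common_exponent (s : seq 'M[R]_n) :
  (forall B, B \in s -> exists2 k, (0 < k)%N & B ^+ k = 1) ->
  exists2 K, (0 < K)%N & forall B, B \in s -> B ^+ K = 1.
Proof.
elim: s => [|B s IH] ord_s; first by exists 1%N.
have [k k0 Bk] := ord_s B (mem_head _ _).
have [K K0 sK] : exists2 K, (0 < K)%N & forall B, B \in s -> B ^+ K = 1.
  by apply: IH => B' sB'; apply: ord_s; rewrite in_cons sB' orbT.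
exists (k * K)%N; first by rewrite muln_gt0 k0 K0.
move=> B'; rewrite in_cons => /orP [/eqP -> | sB']; first by rewrite exprM Bk expr1n.
by rewrite mulnC exprM sK // expr1n.
Qed.

Variable G : set (Eucl R n).
Hypotheses (sG : subgroup G) (fin_rot : finite_set [set erot g | g in G]).

(* Pigeonhole on the powers of [g.1]: two of them coincide, and orthogonal
   matrices are invertible. *)
Lemma rot_order g : G g -> exists2 k, (0 < k)%N & g.1 ^+ k = 1.
Proof.
move=> Gg; have /finite_seqP[s rot_s] := fin_rot.
pose pows := [seq g.1 ^+ j | j <- iota 0 (size s).+1].
have pows_s : {subset pows <= s}.
  move=> _ /mapP[j _ ->].
  suff : [set erot g | g in G] (g.1 ^+ j) by rewrite rot_s.
  by exists (epow g j); [exact: subgroup_epow | rewrite /erot epow_rot].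
have : ~~ uniq pows.
  apply/negP => /uniq_leq_size/(_ pows_s).
  by rewrite size_map size_iota ltnn.
case/(uniqPn 0) => i [j [ij]]; rewrite size_map size_iota => js.
rewrite !(nth_map 0%N) ?size_iota ?(ltn_trans ij) // !nth_iota ?(ltn_trans ij) // !add0n.
move=> gij; exists (j - i)%N; first by rewrite subn_gt0.
have oi : orthogonal_mx (epow g i).1 by apply: (subgroup_orth sG); exact: subgroup_epow.
rewrite epow_rot in oi.
have : (g.1 ^+ i)^T *m g.1 ^+ i *m g.1 ^+ (j - i) = (g.1 ^+ i)^T *m g.1 ^+ i.
  by rewrite -mulmxA mulmxE -exprD subnKC ?(ltnW ij) // -gij.
by rewrite orth_trmx_mul // mul1mx.
Qed.

Lemma rot_exponent : exists2 K, (0 < K)%N & forall g, G g -> g.1 ^+ K = 1.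
Proof.
have /finite_seqP[s rot_s] := fin_rot.
have [K K0 sK] : exists2 K, (0 < K)%N & forall B, B \in s -> B ^+ K = 1.
  apply: common_exponent => B sB; have : [set` s] B := sB.
  by rewrite -rot_s => -[g Gg <-]; exact: rot_order.
exists K => // g Gg; apply: sK.
have : [set erot g | g in G] g.1 by exists g.
by rewrite rot_s.
Qed.

End Exponent.

Section TranslationsSpan.
Variables (R : realType) (d : nat).

Definition dot k (a b : 'cV[R]_k) := \sum_j a j 0 * b j 0.

Lemma dotC k (a b : 'cV[R]_k) : dot a b = dot b a.
Proof. by apply: eq_bigr => j _; rewrite mulrC. Qed.

Lemma dotBl k (a b c : 'cV[R]_k) : dot (a - b) c = dot a c - dot b c.
Proof. by rewrite /dot -sumrB; apply: eq_bigr => j _; rewrite !mxE mulrBl. Qed.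

Lemma dotBr k (a b c : 'cV[R]_k) : dot a (b - c) = dot a b - dot a c.
Proof. by rewrite dotC dotBl !(dotC a). Qed.

Lemma dotZl k (x : R) (a b : 'cV[R]_k) : dot (x *: a) b = x * dot a b.
Proof. by rewrite /dot mulr_sumr; apply: eq_bigr => j _; rewrite !mxE mulrA. Qed.

Lemma dotvv k (a : 'cV[R]_k) : dot a a = sqnorm a.
Proof. by apply: eq_bigr => j _; rewrite expr2. Qed.

Lemma dot_le_sqnorm k (e w : 'cV[R]_k) : 2 * dot e w <= sqnorm e + sqnorm w.
Proof.
rewrite /dot /sqnorm mulr_sumr -big_split; apply: ler_sum => j _ /=.
by have := sqr_ge0 (e j 0 - w j 0); rewrite sqrrB; lra.
Qed.

Lemma sqnorm_eq0 k (a : 'cV[R]_k) : sqnorm a = 0 -> a = 0.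
Proof.
move=> a0; apply/matrixP => i j; rewrite (ord1 j) mxE; apply/eqP; rewrite -sqrf_eq0.
by apply/eqP; apply: (psumr_eq0P _ a0) => // l _; exact: sqr_ge0.
Qed.

Variables (S : set (Eucl R d)) (w : 'cV[R]_d).
Hypotheses (hS : space_group S) (fin_rot : finite_set [set erot s | s in S]).
Hypothesis w_perp : forall s, S s -> s.1 = 1%:M -> dot w s.2 = 0.

(* [w . s.2] only depends on the rotation part [s.1], which takes finitely many values. *)
Lemma dot_transl_bounded : exists2 B, 0 <= B & forall s, S s -> `|dot w s.2| <= B.
Proof.
have [sS _ _] := hS.
have same s s' : S s -> S s' -> s.1 = s'.1 -> dot w s.2 = dot w s'.2.
  move=> Ss Ss' ss'; have St := subgroupM sS Ss (subgroupV sS Ss').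
  have oS := subgroup_orth sS Ss'.
  move: (w_perp St); rewrite /emul /einv /= ss' oS mulmxN mulmxA oS mul1mx => /(_ erefl).
  by move/eqP; rewrite dotBr subr_eq0 => /eqP.
have /finite_seqP[L rot_L] := fin_rot.
suff bound (L' : seq 'M[R]_d) : {subset L' <= L} -> exists2 B, 0 <= B &
    forall s, S s -> s.1 \in L' -> `|dot w s.2| <= B.
  have [B B0 hB] := bound L (fun _ h => h); exists B => // s Ss; apply: hB => //.
  have : [set erot s | s in S] s.1 by exists s.
  by rewrite rot_L.
elim: L' => [|M L' IH] sub; first by exists 0.
have [B B0 hB] : exists2 B, 0 <= B & forall s, S s -> s.1 \in L' -> `|dot w s.2| <= B.
  by apply: IH => x xL'; apply: sub; rewrite in_cons xL' orbT.
have : [set erot s | s in S] M by rewrite rot_L; apply: sub; exact: mem_head.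
case=> sM SsM eM; exists (B + `|dot w sM.2|); first by rewrite addr_ge0.
move=> s Ss; rewrite in_cons => /orP [/eqP e | sL'].
  by rewrite (same s sM) ?lerDr // e -eM.
by apply: le_trans (hB _ Ss sL') _; rewrite lerDl.
Qed.

(* Points far out on the ray through [w] have no lattice point within the
   covering radius [r], since [w . s.2] stays bounded. *)
Lemma transl_perp_eq0 : w = 0.
Proof.
have [_ _ [r cover]] := hS; have [B B0 bound] := dot_transl_bounded.
apply/eqP/negPn/negP => w0.
have W0 : 0 < sqnorm w.
  by rewrite lt_def sqnorm_ge0 andbT; apply: contra w0 => /eqP/sqnorm_eq0->.
set W := sqnorm w in W0.
pose lam := (r ^+ 2 + W + 2 * B + 1) / (2 * W).
have lamW : 2 * (lam * W) = r ^+ 2 + W + 2 * B + 1 by rewrite /lam; field; rewrite gt_eqF.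
have [s Ss] := cover (lam *: w); rewrite /eact mulmx0 add0r => near.
have := dot_le_sqnorm (lam *: w - s.2) w.
rewrite dotBl dotZl dotvv -/W (dotC s.2).
have := bound _ Ss; rewrite ler_norml => /andP[_ ub] le.
have : sqnorm (lam *: w - s.2) + W <= r ^+ 2 + W by rewrite lerD2r.
by move: le ub lamW; clear; lra.
Qed.

End TranslationsSpan.

Section SkewEntries.
Variables (R : realType) (m : nat).

Lemma skew_entry (A : 'M[R]_m) r s : skew_mx A -> A r s = - A s r.
Proof. by move=> skA; have := congr1 (fun M : 'M[R]_m => M s r) skA; rewrite !mxE. Qed.

Lemma skew_diag (A : 'M[R]_m) r : skew_mx A -> A r r = 0.
Proof.
move=> skA; have /eqP := skew_entry r r skA.
by rewrite -addr_eq0 -mulr2n -mulr_natr mulf_eq0 pnatr_eq0 orbF => /eqP.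
Qed.

End SkewEntries.

Section LowerBlock.
Variables (R : realType) (d1 d2 : nat).

Lemma sproj_dsum (A : 'M[R]_d1) (s : Eucl R d2) : sproj (dsum A s) = s.
Proof. by case: s => a b; rewrite /sproj /dsum /= block_mxKdr col_mxKd. Qed.

Lemma mul_block_col0 (A : 'M[R]_d1) (B : 'M[R]_d2) (z : 'cV[R]_d2) :
  block_mx A 0 0 B *m col_mx 0 z = col_mx 0 (B *m z).
Proof. by rewrite mul_block_col !mulmx0 !mul0mx !addr0 add0r. Qed.

Lemma block0_col0 (A : 'M[R]_d1) (z : 'cV[R]_d2) :
  block_mx A 0 0 (0 : 'M[R]_d2) *m col_mx 0 z = 0.
Proof. by rewrite mul_block_col0 mul0mx col_mx0. Qed.

Lemma mx_eq_of_mul m k (A B : 'M[R]_(m, k)) :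
  (forall z : 'cV[R]_k, A *m z = B *m z) -> A = B.
Proof.
move=> AB; apply/matrixP => i j.
by have := congr1 (fun M : 'cV[R]_m => M i 0) (AB (delta_mx j 0)); rewrite -!colE !mxE.
Qed.

Lemma skew_kill_lower (S0 : 'M[R]_(d1 + d2)) : skew_mx S0 ->
  (forall y : 'cV[R]_d2, S0 *m col_mx 0 y = 0) ->
  S0 = block_mx (ulsubmx S0) 0 0 0 /\ skew_mx (ulsubmx S0).
Proof.
move=> skS0 kill; split; last first.
  by rewrite /skew_mx trmx_ulsub skS0; apply/matrixP => i j; rewrite !mxE.
have r0 : rsubmx S0 = 0.
  apply: mx_eq_of_mul => z; rewrite mul0mx -(kill z).
  by rewrite -{2}(hsubmxK S0) mul_row_col mulmx0 add0r.
have r0E i j : S0 i (rshift d1 j) = 0.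
  by have := congr1 (fun M : 'M[R]_(d1 + d2, d2) => M i j) r0; rewrite !mxE.
have ur0 : ursubmx S0 = 0 by apply/matrixP => i j; rewrite !mxE r0E.
have dr0 : drsubmx S0 = 0 by apply/matrixP => i j; rewrite !mxE r0E.
have dl0 : dlsubmx S0 = 0.
  by apply/matrixP => i j; rewrite !mxE (skew_entry _ _ skS0) r0E oppr0.
by rewrite -{1}(submxK S0) ur0 dl0 dr0.
Qed.

End LowerBlock.

Section Kernel.
Variables (R : realType) (d1 d2 : nat).
Local Notation n := (d1 + d2)%N.
Variables (S : set (Eucl R d2)) (G T : set (Eucl R n)) (C : nat -> seq (Eucl R n)).
Variables (x0 : 'cV[R]_n) (Rs : seq (Eucl R n)).
Hypotheses (hS : space_group S) (sG : subgroup G).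
Hypothesis G_dsum : forall g, G g ->
  exists A : 'M[R]_d1, exists2 s, orthogonal_mx A /\ S s & g = dsum A s.
Hypothesis G_onto : forall s, S s -> exists2 g, G g & sproj g = s.
Hypotheses (TG : T `<=` G) (T_transl : [set sproj t | t in T] = transl_subgroup S).
Hypothesis hm0 : exists2 m0 : nat, (0 < m0)%N &
  forall N : nat, (0 < N)%N -> (normal_subgroup (powset T N) G <-> (m0 %| N)%N).
Hypothesis hC : forall N, in_M G T N -> reps G (powset T N) (C N).
Hypothesis fin_rot : finite_set [set erot g | g in G].
Hypothesis hp2 : prop2 G x0 Rs.
Implicit Type u : Eucl R n -> 'cV[R]_n.

Let RsG h : h \in Rs -> G h.
Proof. by case: hp2 => _ RsG _; exact: RsG. Qed.

Let orthRs h : h \in Rs -> orthogonal_mx h.1.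
Proof. by move/RsG; exact: subgroup_orth. Qed.

Lemma fin_rot_S : finite_set [set erot s | s in S].
Proof.
apply: (sub_finite_set _ (finite_image (fun B : 'M[R]_n => drsubmx B) fin_rot)).
move=> _ [s Ss <-]; have [g Gg <-] := G_onto Ss.
by exists g.1 => //; exists g.
Qed.

Lemma T_blockE t : T t ->
  exists A : 'M[R]_d1, t = (block_mx A 0 0 1%:M, col_mx 0 (sproj t).2).
Proof.
move=> Tt; have [A [s [_ _] et]] := G_dsum (TG Tt); subst t; rewrite sproj_dsum.
have : [set sproj t | t in T] s by exists (dsum A s); [exact: Tt | exact: sproj_dsum].
rewrite T_transl => -[_ s1]; have s1' : s.1 = 1%:M := s1.
by exists A; rewrite /dsum s1'.
Qed.

Lemma epow_T t N K : T t -> (forall g, G g -> g.1 ^+ K = 1) ->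
  epow t (N * K) = (1%:M, (N * K)%:R *: col_mx 0 (sproj t).2).
Proof.
move=> Tt rotK; have [A et] := T_blockE Tt.
have fix_t : t.1 *m t.2 = t.2 by rewrite et /= mul_block_col0 mul1mx.
rewrite epow_fixed_transl // mulnC exprM rotK ?expr1n; last exact: TG.
by rewrite {1}et.
Qed.

Lemma periodic_epow (H : set (Eucl R n)) u P j : periodic G H u -> H P -> G P ->
  u (epow P j) = u (eone R n).
Proof.
move=> per HP GP; elim: j => [|j IH] //.
by rewrite epowSr per //; exact: subgroup_epow.
Qed.

Lemma rot_col_mx0 g (z : 'cV[R]_d2) : G g -> exists z', g.1 *m col_mx 0 z = col_mx 0 z'.
Proof. by case/G_dsum => A [s _ ->]; exists (s.1 *m z); rewrite mul_block_col0. Qed.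

Lemma ker_iso_on u N : in_M G T N -> periodic G (powset T N) u ->
  normR x0 Rs (C N) u = 0 ->
  forall g, G g -> exists a S0, skew_mx S0 /\ iso_on x0 Rs u g a S0.
Proof.
move=> inM per norm0 g Gg.
have [_ CG Crep _] := hC inM; have [_ _ TN_normal] := inM.2.
have [c cC TNcg] := Crep _ Gg.
have C0 : C N != [::] by case: (C N) cC.
have /dist_iso_eq0P[// | a [S0 skS0 iso_c]] := normR_eq0_dist_iso C0 norm0 cC.
exists a, S0; split => // h hRs; rewrite -iso_c //; congr (_ *m _).
have Gc := CG c cC; have Gh := RsG hRs.
have [oc oh] := (subgroup_orth sG Gc, subgroup_orth sG Gh).
have := TN_normal _ _ (subgroupV sG Gh) TNcg; rewrite (einvK oh).
move/(per _ _ (subgroupM sG Gc Gh)) <-; congr u.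
rewrite !emulA -(emulA h) (emulV oh) emul1g.
by rewrite -!emulA (emulV oc) emul1g.
Qed.

(* A periodic field is constant along the pure translations [t ^+ (N * K)], so
   the global skew part must kill every lattice direction. *)
Lemma kill_lattice u N a0 S0 : (0 < N)%N -> periodic G (powset T N) u ->
  (forall g, G g -> g.1 *m u g = a0 + S0 *m (eact g x0 - x0)) ->
  forall s, S s -> s.1 = 1%:M -> S0 *m col_mx 0 s.2 = 0.
Proof.
move=> N0 per iso_u s Ss s1.
have : [set sproj t | t in T] s by rewrite T_transl.
case=> t Tt <-; have [K K0 rotK] := rot_exponent sG fin_rot.
have GtNK := subgroup_epow sG (N * K) (TG Tt).
have u_const : u (epow t (N * K)) = u (eone R n).
  have TNt : powset T N (epow t N) by exists t.
  by rewrite epowM (periodic_epow _ per TNt (subgroup_epow sG N (TG Tt))).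
have u1 : u (eone R n) = a0.
  by have := iso_u _ (subgroup1 sG); rewrite eact1 subrr mulmx0 addr0 mul1mx.
have := iso_u _ GtNK; rewrite u_const u1 (epow_T _ Tt rotK) /eact /= !mul1mx.
rewrite addrAC subrr add0r -scalemxAr => /(congr1 (fun v => v - a0)).
rewrite subrr addrC addKr => /esym/eqP.
by rewrite scaler_eq0 pnatr_eq0 muln_eq0 (gtn_eqF N0) (gtn_eqF K0) => /eqP.
Qed.

Lemma kill_lower (S0 : 'M[R]_n) :
  (forall s, S s -> s.1 = 1%:M -> S0 *m col_mx 0 s.2 = 0) ->
  forall y : 'cV[R]_d2, S0 *m col_mx 0 y = 0.
Proof.
move=> kill.
have S0r z : S0 *m col_mx 0 z = rsubmx S0 *m z.
  by rewrite -{1}(hsubmxK S0) mul_row_col mulmx0 add0r.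
suff r0 : rsubmx S0 = 0 by move=> y; rewrite S0r r0 mul0mx.
apply/row_matrixP => k; rewrite row0 -[row k _]trmxK.
suff -> : (row k (rsubmx S0))^T = 0 by rewrite trmx0.
apply: (transl_perp_eq0 hS fin_rot_S) => s Ss s1.
have := congr1 (fun M : 'cV[R]_n => M k 0) (kill s Ss s1); rewrite S0r !mxE => <-.
by apply: eq_bigr => i _; rewrite !mxE.
Qed.

Lemma ker_Uiso00 u : ker_norm G T C x0 Rs u -> Uiso00 G x0 u.
Proof.
case=> N [inM per norm0]; have [_ _ [R1 [R2 [R1e R1gen R2p R12]]]] := hp2.
have [a0 [S0 [skS0 iso_u]]] :=
  global_iso_of_local sG R1e R1gen R2p R12 (ker_iso_on inM per norm0).
have [S0E skS1] := skew_kill_lower skS0 (kill_lower (kill_lattice inM.1 per iso_u)).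
by exists a0; exists (ulsubmx S0) => // g Gg; rewrite iso_u // {1}S0E.
Qed.

Lemma Uiso00_periodic u N K : (forall g, G g -> g.1 ^+ K = 1) ->
  Uiso00 G x0 u -> periodic G (powset T (N * K)) u.
Proof.
move=> rotK [a [S1 _ iso_u]] g _ Gg [t Tt <-]; rewrite /erot in iso_u.
have Ggt := subgroupM sG Gg (subgroup_epow sG (N * K) (TG Tt)).
have [z' gz] := rot_col_mx0 (sproj t).2 Gg.
have eP := epow_T _ Tt rotK.
have rot_gP : (emul g (epow t (N * K))).1 = g.1 by rewrite eP /= mulmx1.
have diff_gP : eact (emul g (epow t (N * K))) x0 - x0 =
    (eact g x0 - x0) + (N * K)%:R *: col_mx 0 z'.
  by rewrite eact_mul_subx eP eact_transl -scalemxAr gz.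
rewrite -[u (emul g _)](orth_trmxK _ (subgroup_orth sG Ggt)) iso_u // rot_gP diff_gP.
rewrite -[u g](orth_trmxK _ (subgroup_orth sG Gg)) iso_u //.
by rewrite [block_mx _ _ _ _ *m _]mulmxDr -scalemxAr block0_col0 scaler0 addr0.
Qed.

Lemma Uiso00_normR0 u N : in_M G T N -> Uiso00 G x0 u -> normR x0 Rs (C N) u = 0.
Proof.
move=> inM [a [S1 skS1 iso_u]]; rewrite /erot in iso_u; have [_ CG _ _] := hC inM.
rewrite /normR big1_seq ?mulr0 ?sqrtr0 // => c /CG Gc.
rewrite dist_iso_Uiso ?expr0n //.
set M : 'M[R]_n := block_mx S1 0 0 0.
have skM : skew_mx M by rewrite /skew_mx tr_block_mx skS1 !trmx0 opp_block_mx !oppr0.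
exists (c.1^T *m (a + M *m (eact c x0 - x0))); exists (c.1^T *m M *m c.1).
  by rewrite /skew_mx !trmx_mul trmxK skM mulNmx mulmxN mulmxA.
move=> h hRs; have Gch := subgroupM sG Gc (RsG hRs).
rewrite -[u _](orth_trmxK _ (subgroup_orth sG Gch)) iso_u // /= trmx_mul.
rewrite -[h.1^T *m _ *m _]mulmxA (orthK _ (orthRs hRs)).
by rewrite eact_mul_subx !mulmxDr addrA !mulmxA.
Qed.

Lemma ker_normP u : ker_norm G T C x0 Rs u <-> Uiso00 G x0 u.
Proof.
split; first exact: ker_Uiso00.
move=> Uu; have [m0 m00 hm] := hm0; have [K K0 rotK] := rot_exponent sG fin_rot.
have NK0 : (0 < m0 * K)%N by rewrite muln_gt0 m00 K0.
have inM : in_M G T (m0 * K) by split => //; apply/(hm _ NK0); exact: dvdn_mulr.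
by exists (m0 * K)%N; split => //; [exact: Uiso00_periodic | exact: Uiso00_normR0].
Qed.

End Kernel.

Section CoordinateSpan.
Variables (R : realType) (n d k : nat).
Hypothesis dk : (d + k = n)%N.

Lemma lin_indep_span (b : 'I_k -> 'cV[R]_n) : lin_indep b ->
  (forall i (j : 'I_n), (j < d)%N -> b i j 0 = 0) ->
  forall y : 'cV[R]_n, (forall j : 'I_n, (j < d)%N -> y j 0 = 0) ->
  exists c : 'I_k -> R, y = \sum_i c i *: b i.
Proof.
move=> indep b_low y y_low.
have shP (l : 'I_k) : (d + l < n)%N by rewrite -dk ltn_add2l.
pose sh l := Ordinal (shP l).
have eq_tail (z w : 'cV[R]_n) : (forall j : 'I_n, (j < d)%N -> z j 0 = 0) ->
    (forall j : 'I_n, (j < d)%N -> w j 0 = 0) -> (forall l, z (sh l) 0 = w (sh l) 0) -> z = w.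
  move=> z_low w_low zw; apply/matrixP => j o; rewrite (ord1 o).
  case: (ltnP j d) => [jd | dj]; first by rewrite z_low ?w_low.
  have jk : (j - d < k)%N by rewrite ltn_subLR // dk.
  by have := zw (Ordinal jk); rewrite (_ : sh _ = j) //; apply: val_inj; rewrite /= subnKC.
have sum_low (c : 'I_k -> R) (j : 'I_n) : (j < d)%N -> (\sum_i c i *: b i) j 0 = 0.
  by move=> jd; rewrite summxE big1 // => i _; rewrite mxE b_low ?mulr0.
pose B := \matrix_(i, l) b i (sh l) 0.
have B_unit : B \in unitmx.
  rewrite -row_free_unit; apply/inj_row_free => v vB.
  have v0 : \sum_i v 0 i *: b i = 0.
    apply: eq_tail => [j /sum_low // | j _ | l]; first by rewrite mxE.
    have := congr1 (fun M : 'rV[R]_k => M 0 l) vB; rewrite !mxE => vBl.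
    by rewrite -[RHS]vBl summxE; apply: eq_bigr => i _; rewrite /B !mxE.
  by apply/rowP => i; rewrite mxE (indep _ v0).
pose y' := \row_l y (sh l) 0.
exists (fun i => (y' *m invmx B) 0 i); apply: eq_tail => // [j /sum_low // | l].
have := congr1 (fun M : 'rV[R]_k => M 0 l) (mulmxKV B_unit y').
rewrite [X in _ = X -> _]mxE => <-.
by rewrite summxE mxE; apply: eq_bigr => i _; rewrite /B !mxE.
Qed.

End CoordinateSpan.

Section Parametrization.
Variables (R : realType) (d3 d4 d2 : nat).
Local Notation n := ((d3 + d4) + d2)%N.
Variables (G : set (Eucl R n)) (x0 : 'cV[R]_n).
Hypothesis sG : subgroup G.
Hypothesis orbit_low : forall g, G g -> forall i : 'I_n, (i < d3)%N -> eact g x0 i 0 = 0.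

Definition Phi_mx (A1 : 'M[R]_(d3, d4)) (A2 : 'M[R]_d4) : 'M[R]_n :=
  block_mx (block_mx 0 A1 (- A1^T) A2) 0 0 (0 : 'M[R]_d2).

Lemma PhiE a A1 A2 g : Phi x0 a A1 A2 g = g.1^T *m (a + Phi_mx A1 A2 *m (eact g x0 - x0)).
Proof. by []. Qed.

Lemma Phi_lin (k : R) a a' A1 A1' A2 A2' g :
  Phi x0 (k *: a + a') (k *: A1 + A1') (k *: A2 + A2') g
  = k *: Phi x0 a A1 A2 g + Phi x0 a' A1' A2' g.
Proof.
rewrite !PhiE.
have -> : Phi_mx (k *: A1 + A1') (k *: A2 + A2') = k *: Phi_mx A1 A2 + Phi_mx A1' A2'.
  rewrite /Phi_mx !scale_block_mx !add_block_mx !scaler0 !addr0.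
  by rewrite linearP /= scalerN opprD.
exact: mul_affine_lin.
Qed.

Lemma skew_Phi_block (A1 : 'M[R]_(d3, d4)) A2 :
  skew_mx A2 -> skew_mx (block_mx 0 A1 (- A1^T) A2).
Proof.
rewrite /skew_mx => skA2.
by rewrite tr_block_mx opp_block_mx skA2 trmx0 oppr0 linearN /= trmxK opprK.
Qed.

Lemma Phi_Uiso00 a A1 A2 : skew_mx A2 -> Uiso00 G x0 (Phi x0 a A1 A2).
Proof.
move=> skA2; exists a; exists (block_mx 0 A1 (- A1^T) A2); first exact: skew_Phi_block.
by move=> g Gg; rewrite PhiE orthK //; exact: subgroup_orth sG _ Gg.
Qed.

Lemma orbit_diff_low g : G g ->
  eact g x0 - x0 = col_mx (col_mx 0 (dsubmx (usubmx (eact g x0 - x0)))) (dsubmx (eact g x0 - x0)).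
Proof.
move=> Gg; have x0_low := orbit_low (subgroup1 sG); rewrite eact1 in x0_low.
move: (eact g x0) (orbit_low Gg) => z z_low.
suff y_low : usubmx (usubmx (z - x0)) = 0 by rewrite -y_low !vsubmxK.
apply/matrixP => i j; rewrite (ord1 j) !mxE.
have low_i : (lshift d2 (lshift d4 i) < d3)%N by rewrite /= ltn_ord.
by rewrite z_low // x0_low // subrr.
Qed.

Lemma Uiso00_Phi u : Uiso00 G x0 u ->
  exists a A1, exists2 A2, skew_mx A2 & forall g, G g -> u g = Phi x0 a A1 A2 g.
Proof.
case=> a [S1 skS1 iso_u]; exists a, (ursubmx S1); exists (drsubmx S1).
  by rewrite /skew_mx trmx_drsub skS1; apply/matrixP => i j; rewrite !mxE.
move=> g Gg; rewrite -[u g](orth_trmxK _ (subgroup_orth sG Gg)) iso_u // PhiE.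
rewrite (orbit_diff_low Gg) /Phi_mx -{1}(submxK S1) !mul_block_col.
by rewrite !mulmx0 !mul0mx !addr0 !add0r.
Qed.

Lemma orbit_dirs_kill (L : 'M[R]_n) : aff_dim (eorbit G x0) (d4 + d2) ->
  (forall g, G g -> L *m (eact g x0 - x0) = 0) ->
  forall y : 'cV[R]_n, (forall j : 'I_n, (j < d3)%N -> y j 0 = 0) -> L *m y = 0.
Proof.
move=> [a0 [b [indep aff]]] L_orbit y y_low.
have x0_low := orbit_low (subgroup1 sG); rewrite eact1 in x0_low.
have b_kill m (M : 'M[R]_(m, n)) : (forall g, G g -> M *m (eact g x0 - x0) = 0) ->
    forall i, M *m b i = 0.
  by move=> M_orbit; apply: (aff_dim_dir_kill aff) => _ [g Gg <-]; exact: M_orbit.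
have b_low i (j : 'I_n) : (j < d3)%N -> b i j 0 = 0.
  move=> jd3; suff /rowP/(_ 0) : row j (b i) = 0 by rewrite !mxE.
  rewrite rowE; apply: b_kill => g Gg.
  move: (eact g x0) (orbit_low Gg) => z z_low.
  by rewrite -rowE; apply/rowP => o; rewrite (ord1 o) !mxE z_low // x0_low // subrr.
have [c ->] := lin_indep_span (addnA d3 d4 d2) indep b_low y_low.
by rewrite mulmx_sumr big1 // => i _; rewrite -scalemxAr b_kill ?scaler0.
Qed.

Lemma Phi_inj : aff_dim (eorbit G x0) (d4 + d2) ->
  forall a A1 A2 a' A1' A2', (forall g, G g -> Phi x0 a A1 A2 g = Phi x0 a' A1' A2' g) ->
  [/\ a = a', A1 = A1' & A2 = A2'].
Proof.
move=> aff a A1 A2 a' A1' A2' eqPhi.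
have ea : a = a'.
  by have := eqPhi _ (subgroup1 sG); rewrite !PhiE eact1 subrr !mulmx0 !addr0 trmx1 !mul1mx.
have PhiB_orbit g : G g -> (Phi_mx A1 A2 - Phi_mx A1' A2') *m (eact g x0 - x0) = 0.
  move=> Gg; have := congr1 (mulmx g.1) (eqPhi g Gg).
  rewrite !PhiE !(orthK _ (subgroup_orth sG Gg)) ea => /addrI.
  by rewrite mulmxBl => ->; rewrite subrr.
have eqA (y4 : 'cV[R]_d4) : A1 *m y4 = A1' *m y4 /\ A2 *m y4 = A2' *m y4.
  have y_low (j : 'I_n) : (j < d3)%N -> col_mx (col_mx 0 y4) (0 : 'cV[R]_d2) j 0 = 0.
    move=> jd3; have -> : j = lshift d2 (lshift d4 (Ordinal jd3)) by apply: val_inj.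
    by rewrite !col_mxEu mxE.
  have := orbit_dirs_kill aff PhiB_orbit y_low.
  rewrite mulmxBl /Phi_mx !mul_block_col !mulmx0 !mul0mx !addr0 !add0r => /eqP.
  by rewrite subr_eq0 => /eqP /eq_col_mx[/eq_col_mx[-> ->]].
by split => //; apply: mx_eq_of_mul => y4; case: (eqA y4).
Qed.

End Parametrization.

Section SkewBasis.
Variables (R : realType) (m : nat).

Definition spair := {j : 'I_m & 'I_j}.

Definition spair_low (p : spair) : 'I_m := widen_ord (ltnW (ltn_ord (tag p))) (tagged p).

Lemma spair_low_lt p : (spair_low p < tag p)%N.
Proof. by rewrite /spair_low /= ltn_ord. Qed.

Lemma spair_inj p q : spair_low p = spair_low q -> tag p = tag q -> p = q.
Proof.
case: p => j i; case: q => j' i' /= eq_low eq_tag; subst j'.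
by congr existT; apply: val_inj; have := congr1 val eq_low.
Qed.

Lemma card_spair : #|{: spair}| = (m * m.-1)./2.
Proof.
rewrite card_tagged -bin2 -bin2_sum big_mkord sumnE big_map big_enum /=.
by apply: eq_bigr => j _; rewrite card_ord.
Qed.

Definition skew_unit (p : spair) : 'M[R]_m :=
  delta_mx (spair_low p) (tag p) - delta_mx (tag p) (spair_low p).

Lemma skew_unit_skew p : skew_mx (skew_unit p).
Proof. by rewrite /skew_mx /skew_unit linearB /= !trmx_delta opprB. Qed.

Lemma skew_sum_skew_unit (f : spair -> R) : skew_mx (\sum_p f p *: skew_unit p).
Proof.
rewrite /skew_mx linear_sum /= -sumrN; apply: eq_bigr => p _.
by rewrite linearZ /= skew_unit_skew scalerN.
Qed.

Lemma sum_skew_unitE (f : spair -> R) q :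
  (\sum_p f p *: skew_unit p) (spair_low q) (tag q) = f q.
Proof.
have ne_q : (spair_low q == tag q) = false by apply: negbTE; rewrite neq_ltn spair_low_lt.
rewrite summxE (bigD1 q) //= big1 ?addr0 => [|p pq].
  by rewrite !mxE !eqxx ne_q subr0 mulr1.
rewrite !mxE.
have -> : (spair_low q == tag p) && (tag q == spair_low p) = false.
  apply/negbTE/negP => /andP[/eqP e1 /eqP e2].
  have := spair_low_lt p; have := spair_low_lt q; rewrite e1 -e2 => lt_q lt_p.
  by have := ltn_trans lt_q lt_p; rewrite ltnn.
case: (boolP ((spair_low q == spair_low p) && (tag q == tag p))) => [/andP[/eqP e1 /eqP e2]|] /=.
  by move: pq; rewrite (spair_inj e1 e2) eqxx.
by rewrite subrr mulr0.
Qed.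

Lemma skew_unit_expand (A : 'M[R]_m) : skew_mx A ->
  \sum_p A (spair_low p) (tag p) *: skew_unit p = A.
Proof.
move=> skA; set B := \sum_p _; have skB : skew_mx B := skew_sum_skew_unit _.
apply/matrixP => r s; case: (ltngtP r s) => rs.
- pose q : spair := Tagged (fun j : 'I_m => 'I_j) (Ordinal rs : 'I_s).
  have lq : spair_low q = r by apply: val_inj.
  by rewrite -[r]lq -[s]/(tag q) sum_skew_unitE.
- pose q : spair := Tagged (fun j : 'I_m => 'I_j) (Ordinal rs : 'I_r).
  have lq : spair_low q = s by apply: val_inj.
  rewrite (skew_entry _ _ skB) (skew_entry r s skA).
  by rewrite -[s]lq -[r]/(tag q) sum_skew_unitE.
- have -> : r = s by apply: val_inj.
  by rewrite (skew_diag _ skB) (skew_diag _ skA).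
Qed.

End SkewBasis.

Section FunSpaceDim.
Variable R : realType.

Lemma linear_coord_sum (I : finType) (V : lmodType R) (X : (I -> R) -> V) :
  (forall r c c', X (fun j => r * c j + c' j) = r *: X c + X c') ->
  forall c, \sum_i c i *: X (fun j => (j == i)%:R) = X c.
Proof.
move=> X_lin c.
have X0 : X (fun _ => 0) = 0.
  have := X_lin 1 (fun _ => 0) (fun _ => 0); rewrite scale1r.
  have -> : (fun _ => 1 * 0 + 0) = fun _ : I => 0 :> R.
    by apply: funext => j; rewrite mulr0 addr0.
  by move=> X00; apply: (addrI (X (fun _ => 0))); rewrite addr0 -X00.
have sum_seq (r : seq I) : \sum_(i <- r) c i *: X (fun j => (j == i)%:R) =
    X (fun j => \sum_(i <- r) c i * (j == i)%:R).
  elim: r => [|i r IH]; first by rewrite big_nil; under eq_fun do rewrite big_nil.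
  by rewrite big_cons IH -X_lin; congr X; apply: funext => j; rewrite big_cons.
rewrite sum_seq; congr X; apply: funext => j.
rewrite (bigD1 j) //= eqxx mulr1 big1 ?addr0 // => i /negbTE ij.
by rewrite eq_sym ij mulr0.
Qed.

Lemma fun_space_dim_param n (G : set (Eucl R n)) (P : (Eucl R n -> 'cV[R]_n) -> Prop) k
    (X : ('I_k -> R) -> Eucl R n -> 'cV[R]_n) :
  (forall r c c' g, X (fun j => r * c j + c' j) g = r *: X c g + X c' g) ->
  (forall c, P (X c)) ->
  (forall c, (forall g, G g -> X c g = 0) -> forall i, c i = 0) ->
  (forall u, P u -> exists c, forall g, G g -> u g = X c g) ->
  fun_space_dim G P k.
Proof.
move=> X_lin XP X_inj X_onto.
have X_sum c g : \sum_i c i *: X (fun j => (j == i)%:R) g = X c g.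
  by apply: (linear_coord_sum (X := fun c => X c g)) => r c1 c2; exact: X_lin.
exists (fun i => X (fun j => (j == i)%:R)); split.
- by move=> c; rewrite (_ : (fun g => _) = X c) //; apply: funext => g; exact: X_sum.
- by move=> c c0; apply: X_inj => g Gg; rewrite -X_sum c0.
- by move=> u /X_onto[c uc]; exists c => g Gg; rewrite uc // X_sum.
Qed.

End FunSpaceDim.

Section Coordinates.
Variables (R : realType) (d3 d4 d2 : nat).
Local Notation n := ((d3 + d4) + d2)%N.
Local Notation np := #|{: spair d4}|.
Local Notation K := (n + (d3 * d4 + np))%N.

Definition coord_a (c : 'I_K -> R) : 'cV[R]_n := \col_i c (lshift _ i).

Definition coord_A1 (c : 'I_K -> R) : 'M[R]_(d3, d4) :=
  vec_mx (\row_k c (rshift n (lshift np k))).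

Definition coord_A2 (c : 'I_K -> R) : 'M[R]_d4 :=
  \sum_(p : spair d4) c (rshift n (rshift (d3 * d4) (enum_rank p))) *: skew_unit R p.

Definition coord (a : 'cV[R]_n) (A1 : 'M[R]_(d3, d4)) (A2 : 'M[R]_d4) (i : 'I_K) : R :=
  match split i with
  | inl j => a j 0
  | inr i2 => match split i2 with
              | inl k => mxvec A1 0 k
              | inr q => A2 (spair_low (enum_val q)) (tag (enum_val q))
              end
  end.

Lemma coord_a_lin r c c' : coord_a (fun j => r * c j + c' j) = r *: coord_a c + coord_a c'.
Proof. by apply/matrixP => i j; rewrite !mxE. Qed.

Lemma coord_A1_lin r c c' : coord_A1 (fun j => r * c j + c' j) = r *: coord_A1 c + coord_A1 c'.
Proof. by rewrite /coord_A1 -linearP /=; congr vec_mx; apply/matrixP => i j; rewrite !mxE. Qed.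

Lemma coord_A2_lin r c c' : coord_A2 (fun j => r * c j + c' j) = r *: coord_A2 c + coord_A2 c'.
Proof.
rewrite /coord_A2 scaler_sumr -big_split; apply: eq_bigr => p _.
by rewrite scalerA scalerDl.
Qed.

Lemma coord_A2_skew c : skew_mx (coord_A2 c).
Proof. exact: skew_sum_skew_unit. Qed.

Lemma coordK c : coord (coord_a c) (coord_A1 c) (coord_A2 c) = c.
Proof.
apply: funext => i; rewrite -[i]splitK; case: (split i) => [j|i2]; rewrite /coord unsplitK /=.
  by rewrite mxE.
rewrite -[i2]splitK; case: (split i2) => [k|q]; rewrite unsplitK /=.
  by rewrite /coord_A1 vec_mxK mxE.
by rewrite /coord_A2 sum_skew_unitE enum_valK.
Qed.

Lemma coord_aK a A1 A2 : coord_a (coord a A1 A2) = a.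
Proof. by apply/matrixP => i j; rewrite (ord1 j) mxE /coord (unsplitK (inl _ i)). Qed.

Lemma coord_A1K a A1 A2 : coord_A1 (coord a A1 A2) = A1.
Proof.
rewrite /coord_A1 -[RHS]mxvecK; congr vec_mx; apply/matrixP => z k.
by rewrite (ord1 z) mxE /coord (unsplitK (inr _ _)) (unsplitK (inl _ k)).
Qed.

Lemma coord_A2K a A1 A2 : skew_mx A2 -> coord_A2 (coord a A1 A2) = A2.
Proof.
move=> skA2; rewrite /coord_A2 -[RHS](skew_unit_expand skA2); apply: eq_bigr => p _.
by rewrite /coord (unsplitK (inr _ _)) (unsplitK (inr _ _)) enum_rankK.
Qed.

Lemma coord0 : coord 0 0 0 = (fun _ => 0).
Proof.
apply: funext => i; rewrite /coord.
by case: (split i) => [j|i2]; [|case: (split i2) => [k|q]]; rewrite ?linear0 mxE.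
Qed.

Lemma Phi0 (x0 : 'cV[R]_n) g : Phi x0 0 (0 : 'M[R]_(d3, d4)) (0 : 'M[R]_d4) g = 0.
Proof. by rewrite PhiE /Phi_mx trmx0 oppr0 !block_mx0 mul0mx addr0 mulmx0. Qed.

Lemma fun_space_dim_Phi (G : set (Eucl R n)) P (x0 : 'cV[R]_n) :
  (forall a A1 A2, skew_mx A2 -> P (Phi x0 a A1 A2)) ->
  (forall a A1 A2 a' A1' A2', skew_mx A2 -> skew_mx A2' ->
     (forall g, G g -> Phi x0 a A1 A2 g = Phi x0 a' A1' A2' g) ->
     [/\ a = a', A1 = A1' & A2 = A2']) ->
  (forall u, P u ->
     exists a A1, exists2 A2, skew_mx A2 & forall g, G g -> u g = Phi x0 a A1 A2 g) ->
  fun_space_dim G P K.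
Proof.
move=> Phi_P Phi_inj Phi_onto.
apply: (fun_space_dim_param (X := fun c => Phi x0 (coord_a c) (coord_A1 c) (coord_A2 c))).
- by move=> r c c' g; rewrite coord_a_lin coord_A1_lin coord_A2_lin Phi_lin.
- by move=> c; apply: Phi_P; exact: coord_A2_skew.
- move=> c c0; have skew0 : skew_mx (0 : 'M[R]_d4) by rewrite /skew_mx trmx0 oppr0.
  have c0' g : G g -> Phi x0 (coord_a c) (coord_A1 c) (coord_A2 c) g = Phi x0 0 0 0 g.
    by move=> Gg; rewrite Phi0; exact: c0.
  have [ea eA1 eA2] := Phi_inj _ _ _ _ _ _ (coord_A2_skew c) skew0 c0'.
  by have := coordK c; rewrite ea eA1 eA2 coord0 => <-.
- move=> u /Phi_onto[a [A1 [A2 skA2 uPhi]]]; exists (coord a A1 A2) => g Gg.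
  by rewrite uPhi // coord_aK coord_A1K coord_A2K.
Qed.

End Coordinates.

Unset Implicit Arguments.
Theorem corollary3p28 (R : realType) (d3 d4 d2 : nat)
  (S : set (Eucl R d2))
  (G T : set (Eucl R ((d3 + d4) + d2)))
  (C : nat -> seq (Eucl R ((d3 + d4) + d2)))
  (x0 : 'cV[R]_((d3 + d4) + d2))
  (Rs : seq (Eucl R ((d3 + d4) + d2))) :
  space_group S ->
  subgroup G -> discrete_set G ->
  (forall g, G g -> exists A : 'M[R]_(d3 + d4),
      exists2 s, orthogonal_mx A /\ S s & g = dsum A s) ->
  (forall s, S s -> exists2 g, G g & sproj g = s) ->
  T `<=` G ->
  (forall t1 t2, T t1 -> T t2 -> sproj t1 = sproj t2 -> t1 = t2) ->
  [set sproj t | t in T] = transl_subgroup S ->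
  (exists2 m0 : nat, (0 < m0)%N &
     forall N : nat, (0 < N)%N -> (normal_subgroup (powset T N) G <-> (m0 %| N)%N)) ->
  (forall N, in_M G T N -> reps G (powset T N) (C N)) ->
  (forall g h, G g -> G h -> eact g x0 = eact h x0 -> g = h) ->
  aff_dim (eorbit G x0) (d4 + d2) ->
  (forall g, G g -> forall i : 'I_((d3 + d4) + d2), (i < d3)%N -> eact g x0 i ord0 = 0) ->
  (forall g, G g -> forall y : 'cV[R]_((d3 + d4) + d2),
      (forall i : 'I_((d3 + d4) + d2), (d3 <= i)%N -> y i ord0 = 0) -> erot g *m y = y) ->
  finite_set [set erot g | g in G] ->
  prop2 G x0 Rs ->
  (forall u, ker_norm G T C x0 Rs u <-> Uiso00 G x0 u) /\
  [/\ (forall (k : R) a a' A1 A1' A2 A2' g,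
          Phi x0 (k *: a + a') (k *: A1 + A1') (k *: A2 + A2') g
          = k *: Phi x0 a A1 A2 g + Phi x0 a' A1' A2' g),
      (forall a A1 A2, skew_mx A2 -> ker_norm G T C x0 Rs (Phi x0 a A1 A2)),
      (forall a A1 A2 a' A1' A2', skew_mx A2 -> skew_mx A2' ->
          (forall g, G g -> Phi x0 a A1 A2 g = Phi x0 a' A1' A2' g) ->
          [/\ a = a', A1 = A1' & A2 = A2']),
      (forall u, ker_norm G T C x0 Rs u ->
          exists a A1, exists2 A2, skew_mx A2 & forall g, G g -> u g = Phi x0 a A1 A2 g) &
      fun_space_dim G (ker_norm G T C x0 Rs)
        (((d3 + d4) + d2) + (d4 * (d3 + (d3 + d4) - 1)) %/ 2)].
Proof.
move=> hS sG _ G_dsum G_onto TG _ T_transl hm0 hC _ aff orbit_low _ fin_rot hp2.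
have kerP := ker_normP hS sG G_dsum G_onto TG T_transl hm0 hC fin_rot hp2.
have Phi_ker a A1 A2 : skew_mx A2 -> ker_norm G T C x0 Rs (Phi x0 a A1 A2).
  by move=> skA2; apply/kerP; exact: Phi_Uiso00.
have Phi_onto u : ker_norm G T C x0 Rs u ->
    exists a A1, exists2 A2, skew_mx A2 & forall g, G g -> u g = Phi x0 a A1 A2 g.
  by move/kerP; exact: Uiso00_Phi.
have Phi_inj' a A1 A2 a' A1' A2' : skew_mx A2 -> skew_mx A2' ->
    (forall g, G g -> Phi x0 a A1 A2 g = Phi x0 a' A1' A2' g) ->
    [/\ a = a', A1 = A1' & A2 = A2'].
  by move=> _ _; exact: Phi_inj.
split => //; split => //; first exact: Phi_lin.
have -> : ((d4 * (d3 + (d3 + d4) - 1)) %/ 2 = d3 * d4 + #|{: spair d4}|)%N.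
  by rewrite card_spair -divn2; nia.
exact: (fun_space_dim_Phi Phi_ker Phi_inj' Phi_onto).
Qed.
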